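(* Let $\mathbf L=\{L_1,\dots,L_n\}$ be a finite multiset of positive rationals, $k\in\mathbb N_{>0}$, and suppose $L_{co}\ne l^\star$. Let $\Sigma=\sum_{i\in I_{co}}L_i$, $$\underline l=\max\Bigl\{L_{co},\ \frac{\Sigma}{k+|I_{co}|}\Bigr\},\qquad \overline l=\frac{\Sigma}{k}.$$ Then $\bigl(I_{co},\ i\mapsto\lceil L_i/\overline l\rceil,\ i\mapsto\lceil L_i/\underline l\rceil\bigr)$ is an admissible restriction.
   Context: $m(l)=\sum_{i=1}^n\lfloor L_i/l\rfloor$, $c(l)=\sum_i(\lceil L_i/l\rceil-1)$; $l$ feasible iff $m(l)\ge k$; $l^\star$ is the unique optimal cut length (feasible length minimizing $c$ among feasible lengths; equals the largest feasible length). $L^{(k)}$ is the $k$-th largest element of $\mathbf L$ with multiplicity; $L_{co}=L^{(k)}$ if $k\le n$, $L_{co}=0$ if $k>n$; $I_{co}=\{i: L_i>L_{co}\}$. A triple $(I,f_l,f_u)$ with $I\subseteq[1..n]$, $f_l,f_u:I\to\mathbb N_{>0}$ is an admissible restriction if (i) for all $i\in I$, $f_l(i)=1$ or $L_i/(f_l(i)-1)$ is infeasible; (ii) for all $i\in I$, $L_i/f_u(i)$ is feasible; (iii) for all $i'\notin I$, $L_{i'}$ is feasible and $L_{i'}\ne l^\star$. *)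

From HB Require Import structures.
From mathcomp Require Import all_boot all_order all_algebra.
Set Implicit Arguments. Unset Strict Implicit. Unset Printing Implicit Defensive.
Import Order.TTheory GRing.Theory Num.Theory.
Local Open Scope ring_scope.

Section CutDefs.
Variables (n : nat) (L : 'I_n -> rat) (k : nat).

Definition mcount (l : rat) : int := \sum_(i < n) Num.floor (L i / l).

Definition ccost (l : rat) : int := \sum_(i < n) (Num.ceil (L i / l) - 1).

Definition feasible (l : rat) : Prop := 0 < l /\ (k%:Z <= mcount l).

Definition optimal (l : rat) : Prop :=
  feasible l /\ forall l', feasible l' -> ccost l <= ccost l'.

(* L^(k): k-th largest element of L with multiplicity; L_co *)
Definition Lsorted : seq rat := sort (fun x y : rat => y <= x) [seq L i | i <- enum 'I_n].
Definition Lco : rat := if (k <= n)%N then nth 0 Lsorted k.-1 else 0.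

Definition Ico : {set 'I_n} := [set i | Lco < L i].

(* admissible restriction (I, f_l, f_u), with f_l, f_u : I -> N_{>0}
   represented as int-valued functions required to be positive on I. *)
Definition admissible (lstar : rat) (I : {set 'I_n}) (fl fu : 'I_n -> int) : Prop :=
  (forall i, i \in I -> 0 < fl i /\ 0 < fu i) /\
  (forall i, i \in I -> fl i = 1 \/ ~ feasible (L i / (fl i - 1)%:~R)) /\
  (forall i, i \in I -> feasible (L i / (fu i)%:~R)) /\
  (forall i, i \notin I -> feasible (L i) /\ L i <> lstar).

End CutDefs.

(* The optimal length [lstar] is the largest feasible length: any feasible
   [l] can be lengthened, without decreasing any floor [L i / l], until a piece is
   cut exactly, and a feasible length above [lstar] that cuts a piece exactly
   has strictly smaller cost.  Hence [lstar] dominates the feasible lengths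
   [Lco] (at least [k] pieces are [>= Lco]) and [Sigma / (k + #|Ico|)], while
   all parts of length [lstar] come from pieces of [Ico], so [k lstar <= Sigma].
   The admissibility conditions then follow from the monotonicity of [m]. *)

From HB Require Import structures.
From mathcomp Require Import all_boot all_order all_algebra.
Import Order.TTheory GRing.Theory Num.Theory.
Set Implicit Arguments.
Unset Strict Implicit.
Unset Printing Implicit Defensive.

Local Open Scope ring_scope.

Lemma ler_wpdiv2l (R : numFieldType) (x l l' : R) :
  0 <= x -> 0 < l -> l <= l' -> x / l' <= x / l.
Proof.
move=> x0 l0 ll'; apply: ler_wpM2l => //.
by rewrite lef_pV2 // posrE (lt_le_trans l0).
Qed.

Lemma ltr_pdiv2l (R : numFieldType) (x l l' : R) :
  0 < x -> 0 < l -> l < l' -> x / l' < x / l.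
Proof.
move=> x0 l0 ll'; rewrite ltr_pM2l //.
by rewrite ltf_pV2 // posrE (lt_trans l0).
Qed.

Section CuttingStock.
Variables (n : nat) (L : 'I_n -> rat) (k : nat).
Hypothesis Lpos : forall i, 0 < L i.
Hypothesis kpos : (0 < k)%N.

Local Notation Sigma := (\sum_(i in Ico L k) L i).

Lemma le_mcount l l' : 0 < l -> l <= l' -> mcount L l' <= mcount L l.
Proof.
move=> l0 ll'; apply: ler_sum => i _; apply: le_floor.
exact: ler_wpdiv2l (ltW (Lpos i)) l0 ll'.
Qed.

Lemma feasible_le l l' : feasible L k l' -> 0 < l -> l <= l' -> feasible L k l.
Proof.
by move=> [_ ml'] l0 ll'; split => //; apply: le_trans ml' (le_mcount l0 ll').
Qed.

(* Shrinking a length strictly increases the ceiling of every piece that was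
   cut exactly, and does not decrease the others. *)
Lemma ccost_lt l l' i :
  0 < l -> l < l' -> L i / l' \is a Num.int -> ccost L l' < ccost L l.
Proof.
move=> l0 ll' /[!intrEceil] /eqP ceil_i.
rewrite /ccost (bigD1 i) //= [X in _ < X](bigD1 i) //=.
apply: ltr_leD.
  by rewrite ltrD2r ceil_gt_int ceil_i ltr_pdiv2l.
apply: ler_sum => j _; rewrite lerD2r; apply: le_ceil.
exact: ler_wpdiv2l (ltW (Lpos j)) l0 (ltW ll').
Qed.

(* Lengthen [l] until some piece [L i0] is cut exactly: take the least
   [L i / floor (L i / l)] over the pieces yielding at least one part. *)
Lemma feasible_exact_cut l : feasible L k l ->
  exists l' i, [/\ l <= l', feasible L k l' & L i / l' \is a Num.int].
Proof.
move=> [l0 ml].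
pose f i := Num.floor (L i / l).
have [i1 f_i1] : exists i, 0 < f i.
  apply/existsP; apply: contraTT ml => /existsPn f_le0.
  rewrite -ltNge (@le_lt_trans _ _ 0) ?ltz_nat //.
  by apply: sumr_le0 => i _; rewrite leNgt f_le0.
case: (@arg_minP _ _ _ i1 (fun i => 0 < f i) (fun i => L i / (f i)%:~R) f_i1).
move=> i0 f_i0 min_i0; pose l' := L i0 / (f i0)%:~R.
have f_i0R : 0 < ((f i0)%:~R : rat) by rewrite ltr0z.
have Lf_i0 : L i0 / l' = (f i0)%:~R by rewrite divKf // gt_eqF.
have l'0 : 0 < l' by rewrite divr_gt0.
have le_f j : f j <= Num.floor (L j / l').
  have [f_j|f_j] := ltrP 0 (f j).
    rewrite floor_ge_int ler_pdivlMr // mulrC -ler_pdivlMr ?ltr0z //.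
    exact: min_i0.
  by apply: le_trans f_j _; rewrite floor_ge0 divr_ge0 // ltW.
exists l', i0; split.
- by rewrite ler_pdivlMr // mulrC -ler_pdivlMr // floor_le.
- by split => //; apply: le_trans ml _; apply: ler_sum => j _; apply: le_f.
- by rewrite Lf_i0 intr_int.
Qed.

Lemma optimal_ge_feasible lstar l :
  optimal L k lstar -> feasible L k l -> l <= lstar.
Proof.
move=> [[ls0 _] ls_min] /feasible_exact_cut [l' [i [ll' feas_l' int_i]]].
apply: le_trans ll' _; rewrite leNgt; apply/negP => ls_l'.
by move: (ls_min l' feas_l'); apply/negP; rewrite -ltNge (ccost_lt ls0 ls_l' int_i).
Qed.

Lemma size_Lsorted : size (Lsorted L) = n.
Proof. by rewrite size_sort size_map size_enum_ord. Qed.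

Lemma sorted_Lsorted : sorted (fun x y : rat => y <= x) (Lsorted L).
Proof. by apply: sort_sorted => x y; apply: le_total. Qed.

Lemma Lco_mem : (k <= n)%N -> exists i, Lco L k = L i.
Proof.
move=> kn; have : Lco L k \in Lsorted L.
  by rewrite /Lco kn; apply: mem_nth; rewrite size_Lsorted prednK.
by rewrite mem_sort => /mapP [i _ ->]; exists i.
Qed.

Lemma Lco_count : (k <= n)%N -> (k <= #|[pred i | (Lco L k <= L i)%R]|)%N.
Proof.
move=> kn; set s := Lsorted L.
have take_ge : all (fun x => Lco L k <= x) (take k s).
  apply/allP => x /(nthP 0) [j]; rewrite size_takel ?size_Lsorted // => jk <-.
  rewrite nth_take // /Lco kn.
  have ge_trans : transitive (fun x y : rat => y <= x).
    by move=> b a c ba cb; apply: le_trans ba.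
  apply: (sorted_leq_nth ge_trans lexx 0 sorted_Lsorted);
    rewrite ?inE ?size_Lsorted.
  - exact: leq_trans jk kn.
  - by rewrite prednK.
  - by rewrite -ltnS prednK.
have count_s : count (fun x => Lco L k <= x) s = #|[pred i | (Lco L k <= L i)%R]|.
  rewrite (permP (permEl (perm_sort _ _))) count_map cardE /enum_mem.
  by rewrite size_filter count_filter; apply: eq_count => i; rewrite /= andbT.
apply: leq_trans _ (eq_leq count_s).
rewrite -(cat_take_drop k s) count_cat (leq_trans _ (leq_addr _ _)) //.
by move: take_ge; rewrite all_count => /eqP ->; rewrite size_takel ?size_Lsorted.
Qed.

Lemma Lco_feasible : (k <= n)%N -> feasible L k (Lco L k).
Proof.
move=> kn; have [i0 Lco_i0] := Lco_mem kn.
have Lco_gt0 : 0 < Lco L k by rewrite Lco_i0.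
split => //; set P := [pred i | (Lco L k <= L i)%R].
apply: (@le_trans _ _ (#|P|%:Z)); first by rewrite lez_nat Lco_count.
have -> : #|P|%:Z = \sum_(i in P) 1 by rewrite sumr_const natz.
rewrite /mcount [X in _ <= X](bigID (mem P)) /=.
rewrite -[X in X <= _]addr0 lerD //.
  by apply: ler_sum => i P_i; rewrite floor_ge_int ler_pdivlMr // mul1r.
by apply: sumr_ge0 => i _; rewrite floor_ge0 divr_ge0 // ltW.
Qed.

Lemma notin_Ico_le i : i \notin Ico L k -> L i <= Lco L k.
Proof. by rewrite inE -leNgt. Qed.

Lemma Lco_lt_optimal lstar :
  optimal L k lstar -> Lco L k <> lstar -> Lco L k < lstar.
Proof.
move=> opt_ls Lco_ls; have [kn|nk] := leqP k n.
  by rewrite lt_neqAle (optimal_ge_feasible opt_ls (Lco_feasible kn)) andbT; apply/eqP.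
by case: opt_ls => [[ls0 _] _]; rewrite /Lco leqNgt nk.
Qed.

(* Every piece outside [Ico] is shorter than [lstar], so all parts of length
   [lstar] are cut from pieces in [Ico]. *)
Lemma optimal_le_Sigma lstar :
  optimal L k lstar -> Lco L k < lstar -> lstar <= Sigma / k%:R.
Proof.
move=> [[ls0 ml] _] Lco_ls; rewrite ler_pdivlMr ?ltr0n // -ler_pdivlMl //.
apply: le_trans (_ : (mcount L lstar)%:~R <= _); first by rewrite -(ler_int rat) in ml.
rewrite /mcount rmorph_sum mulr_sumr [X in _ <= X]big_mkcond /=.
apply: ler_sum => i _; case: ifP => [_|i_Ico].
  by rewrite mulrC floor_le.
rewrite lerz0 floor_le0 ltr_pdivrMr // mul1r (le_lt_trans _ Lco_ls) //.
by apply: notin_Ico_le; rewrite i_Ico.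
Qed.

Lemma feasible_notin_Ico i : i \notin Ico L k -> feasible L k (L i).
Proof.
move=> /notin_Ico_le Li_Lco; have [kn|nk] := leqP k n.
  exact: feasible_le (Lco_feasible kn) (Lpos i) Li_Lco.
by move: Li_Lco; rewrite /Lco leqNgt nk /= leNgt Lpos.
Qed.

Lemma Sigma_gt0 i : i \in Ico L k -> 0 < Sigma.
Proof.
move=> i_Ico; rewrite (bigD1 i) //= ltr_pwDl // sumr_ge0 // => j _.
exact: ltW.
Qed.

(* Since [floor x > x - 1], the pieces of [Ico] alone yield more than
   [Sigma / l - #|Ico|] parts, which is [k] for this [l]. *)
Lemma feasible_Sigma_div : 0 < Sigma -> feasible L k (Sigma / (k + #|Ico L k|)%:R).
Proof.
move=> S_gt0; set c : rat := (k + #|Ico L k|)%:R.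
have c_gt0 : 0 < c by rewrite ltr0n addn_gt0 kpos.
have l_gt0 : 0 < Sigma / c by rewrite divr_gt0.
split => //; rewrite -(ler_int rat) /mcount rmorph_sum /=.
apply: le_trans (_ : \sum_(j in Ico L k) (L j / (Sigma / c) - 1) <= _).
  rewrite big_split /= -mulr_suml sumrN sumr_const invf_div mulrCA divff ?gt_eqF //.
  by rewrite mulr1 /c natrD addrK.
rewrite [X in _ <= X](bigID (mem (Ico L k))) /= -[X in X <= _]addr0 lerD //.
  apply: ler_sum => j _; apply: ltW; rewrite ltrBlDr -[1]/(1%:~R) -intrD.
  exact: floorD1_gt.
by apply: sumr_ge0 => j _; rewrite ler0z floor_ge0 divr_ge0 // ltW.
Qed.

Lemma infeasible_div_ceil_pred lstar l i :
  optimal L k lstar -> lstar <= l -> 1 < Num.ceil (L i / l) ->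
  ~ feasible L k (L i / (Num.ceil (L i / l) - 1)%:~R).
Proof.
move=> opt_ls ls_l ceil_gt1 /(optimal_ge_feasible opt_ls); apply/negP.
have l_gt0 : 0 < l by case: opt_ls => [[ls_gt0 _] _]; apply: lt_le_trans ls_l.
rewrite -ltNge (le_lt_trans ls_l) // ltr_pdivlMr ?ltr0z ?subr_gt0 //.
by rewrite mulrC -ltr_pdivlMr // ceilB1_lt.
Qed.

Lemma feasible_div_ceil l' l i :
  feasible L k l' -> 0 < l -> l <= l' -> feasible L k (L i / (Num.ceil (L i / l))%:~R).
Proof.
move=> feas_l' l_gt0 ll'.
have ceil_gt0R : 0 < (Num.ceil (L i / l))%:~R :> rat.
  by rewrite ltr0z ceil_gt0 divr_gt0.
apply: (feasible_le feas_l'); first by rewrite divr_gt0.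
by apply: le_trans ll'; rewrite ler_pdivrMr // mulrC -ler_pdivrMr // ceil_ge.
Qed.

End CuttingStock.

Theorem mainTheorem12 (n : nat) (L : 'I_n -> rat) (k : nat)
  (Lpos : forall i, 0 < L i) (kpos : (0 < k)%N)
  (lstar : rat) (Hopt : optimal L k lstar)
  (Hco : Lco L k <> lstar) :
  let Sigma := \sum_(i in Ico L k) L i in
  let lunder := Num.max (Lco L k) (Sigma / (k + #|Ico L k|)%:R) in
  let lover := Sigma / k%:R in
  admissible L k lstar (Ico L k)
    (fun i => Num.ceil (L i / lover)) (fun i => Num.ceil (L i / lunder)).
Proof.
move=> Sigma lunder lover.
have ls_feas : feasible L k lstar by case: Hopt.
have Lco_ls := Lco_lt_optimal Lpos kpos Hopt Hco.
have ls_lover : lstar <= lover := optimal_le_Sigma kpos Hopt Lco_ls.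
have lover_gt0 : 0 < lover by apply: lt_le_trans ls_lover; case: ls_feas.
have lunder_bounds i : i \in Ico L k -> 0 < lunder <= lstar.
  move/(Sigma_gt0 Lpos)/(feasible_Sigma_div Lpos kpos) => l_feas.
  have [l_gt0 _] := l_feas.
  rewrite lt_max l_gt0 orbT ge_max (ltW Lco_ls).
  exact: (optimal_ge_feasible Lpos kpos Hopt l_feas).
split; [|split; [|split]] => i.
- move=> /lunder_bounds /andP[lunder_gt0 _].
  by split; rewrite ceil_gt0 divr_gt0.
- move=> _; have [->|ceil_neq1] := eqVneq (Num.ceil (L i / lover)) 1; [by left|right].
  apply: (infeasible_div_ceil_pred Lpos kpos Hopt ls_lover).
  by rewrite lt_neqAle eq_sym ceil_neq1 -gtz0_ge1 ceil_gt0 divr_gt0.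
- move=> /lunder_bounds /andP[lunder_gt0 lunder_ls].
  exact: (feasible_div_ceil Lpos i ls_feas lunder_gt0 lunder_ls).
- move=> i_Ico; split; first exact: feasible_notin_Ico.
  by move=> Li_ls; move: (notin_Ico_le i_Ico); rewrite Li_ls leNgt Lco_ls.
Qed.
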